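(* Let $\mathcal{F},\mathcal{G}:\mathbf{Sets}\times\mathbf{Sets}\to\mathbf{Sets}$ be functors that preserve injections and preserve pullbacks along injective morphisms, and let $\mathcal{GF}:\mathbf{Sets}\times\mathbf{Sets}\to\mathbf{Sets}\times\mathbf{Sets}$ be $\mathcal{GF}(N,E)=(\mathcal{F}(N,E),\mathcal{G}(N,E))$. Let $\mathcal{M}$ be the class of morphisms $\langle f_N,f_E\rangle$ of $\mathcal{GF}$-coalgebras with $f_N$ and $f_E$ injective. Then $(\mathbf{Coalg}_{\mathcal{GF}},\mathcal{M})$ is an $\mathcal{M}$-adhesive category.
   Context: A $\mathcal{GF}$-coalgebra (coalgebraic graph) is $(N,E)$ with functions $c:N\to\mathcal{F}(N,E)$ and $st:E\to\mathcal{G}(N,E)$; morphisms are pairs $(f_N,f_E)$ with $\mathcal{F}(f_N,f_E)\circ c_1=c_2\circ f_N$ and $\mathcal{G}(f_N,f_E)\circ st_1=st_2\circ f_E$. A functor on $\mathbf{Sets}\times\mathbf{Sets}$ preserves injections if it maps componentwise injective pairs to injective maps, and preserves pullbacks along injective morphisms if it maps every pullback square (computed componentwise) over a cospan one of whose legs is componentwise injective to a pullback. A pair $(\mathbf{C},\mathcal{M})$ with $\mathcal{M}$ a class of monomorphisms is $\mathcal{M}$-adhesive if $\mathcal{M}$ contains identities and is closed under composition, pushouts and pullbacks along $\mathcal{M}$-morphisms exist and $\mathcal{M}$ is stable under them, and pushouts along $\mathcal{M}$-morphisms are vertical weak van Kampen squares (for any commutative cube with such a pushout as bottom, pullbacks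 as back faces and all vertical morphisms in $\mathcal{M}$, the top face is a pushout iff the front faces are pullbacks). *)

Definition injective {A B : Type} (f : A -> B) : Prop :=
  forall x y, f x = f y -> x = y.

Definition isPullbackSet {P X Y Z : Type}
  (p1 : P -> X) (p2 : P -> Y) (g1 : X -> Z) (g2 : Y -> Z) : Prop :=
  (forall x, g1 (p1 x) = g2 (p2 x)) /\
  forall (Q : Type) (q1 : Q -> X) (q2 : Q -> Y),
    (forall x, g1 (q1 x) = g2 (q2 x)) ->
    exists u : Q -> P,
      (forall x, p1 (u x) = q1 x) /\ (forall x, p2 (u x) = q2 x) /\
      forall u' : Q -> P,
        (forall x, p1 (u' x) = q1 x) -> (forall x, p2 (u' x) = q2 x) ->
        forall x, u' x = u x.

Record BiFunctor := {
  ob :> Type -> Type -> Type;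
  fmap : forall {A B C D : Type}, (A -> C) -> (B -> D) -> ob A B -> ob C D;
  fmap_id : forall (A B : Type) (x : ob A B), fmap (fun a => a) (fun b => b) x = x;
  fmap_comp : forall (A B C D E H : Type) (f : A -> C) (g : B -> D)
                (f' : C -> E) (g' : D -> H) (x : ob A B),
      fmap (fun a => f' (f a)) (fun b => g' (g b)) x = fmap f' g' (fmap f g x)
}.
Arguments fmap _ {A B C D} _ _ _.

Definition preserves_injections (F : BiFunctor) : Prop :=
  forall (A B C D : Type) (f : A -> C) (g : B -> D),
    injective f -> injective g -> injective (fmap F f g).

Definition preserves_pullbacks_along_injections (F : BiFunctor) : Prop :=
  forall (P1 P2 X1 X2 Y1 Y2 Z1 Z2 : Type)
    (p11 : P1 -> X1) (p12 : P2 -> X2) (p21 : P1 -> Y1) (p22 : P2 -> Y2)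
    (g11 : X1 -> Z1) (g12 : X2 -> Z2) (g21 : Y1 -> Z1) (g22 : Y2 -> Z2),
    isPullbackSet p11 p21 g11 g21 ->
    isPullbackSet p12 p22 g12 g22 ->
    ((injective g11 /\ injective g12) \/ (injective g21 /\ injective g22)) ->
    isPullbackSet (fmap F p11 p12) (fmap F p21 p22)
                  (fmap F g11 g12) (fmap F g21 g22).

Section Coalgebras.
Variables (F G : BiFunctor).

Record Coalg := {
  Nd : Type;
  Ed : Type;
  cmap : Nd -> F Nd Ed;
  stmap : Ed -> G Nd Ed
}.

Record Hom (X Y : Coalg) := {
  hN : Nd X -> Nd Y;
  hE : Ed X -> Ed Y;
  hom_c : forall n, fmap F hN hE (cmap X n) = cmap Y (hN n);
  hom_st : forall e, fmap G hN hE (stmap X e) = stmap Y (hE e)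
}.
Arguments hN {X Y} _ _ : rename.
Arguments hE {X Y} _ _ : rename.

Definition heq {X Y : Coalg} (f g : Hom X Y) : Prop :=
  (forall n, hN f n = hN g n) /\ (forall e, hE f e = hE g e).

Program Definition hid (X : Coalg) : Hom X X :=
  {| hN := fun n => n; hE := fun e => e |}.
Next Obligation. intros; apply fmap_id. Qed.
Next Obligation. intros; apply fmap_id. Qed.

Program Definition hcomp {X Y Z : Coalg} (g : Hom Y Z) (f : Hom X Y) : Hom X Z :=
  {| hN := fun n => hN g (hN f n); hE := fun e => hE g (hE f e) |}.
Next Obligation.
  intros; rewrite fmap_comp, !hom_c. reflexivity. Qed.
Next Obligation.
  intros; rewrite fmap_comp, !hom_st. reflexivity. Qed.

Definition commutes {P X Y Z : Coalg}
  (p1 : Hom P X) (p2 : Hom P Y) (g1 : Hom X Z) (g2 : Hom Y Z) : Prop :=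
  heq (hcomp g1 p1) (hcomp g2 p2).

Definition isPullback {P X Y Z : Coalg}
  (p1 : Hom P X) (p2 : Hom P Y) (g1 : Hom X Z) (g2 : Hom Y Z) : Prop :=
  commutes p1 p2 g1 g2 /\
  forall (Q : Coalg) (q1 : Hom Q X) (q2 : Hom Q Y),
    commutes q1 q2 g1 g2 ->
    exists u : Hom Q P,
      heq (hcomp p1 u) q1 /\ heq (hcomp p2 u) q2 /\
      forall u' : Hom Q P,
        heq (hcomp p1 u') q1 -> heq (hcomp p2 u') q2 -> heq u' u.

Definition isPushout {A B C D : Coalg}
  (m : Hom A B) (f : Hom A C) (g : Hom B D) (n : Hom C D) : Prop :=
  commutes m f g n /\
  forall (Q : Coalg) (u : Hom B Q) (v : Hom C Q),
    commutes m f u v ->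
    exists w : Hom D Q,
      heq (hcomp w g) u /\ heq (hcomp w n) v /\
      forall w' : Hom D Q,
        heq (hcomp w' g) u -> heq (hcomp w' n) v -> heq w' w.

Definition isMono {X Y : Coalg} (m : Hom X Y) : Prop :=
  forall (Q : Coalg) (u v : Hom Q X), heq (hcomp m u) (hcomp m v) -> heq u v.

Definition MorClass := forall X Y : Coalg, Hom X Y -> Prop.

Definition Minj : MorClass :=
  fun X Y f => injective (hN f) /\ injective (hE f).

(* top:    A' --m'--> B'        bottom:  A --m--> B
             |f'        |g'                |f       |g
             C' --n'--> D'                 C --n--> D
     vertical: a : A' -> A, b : B' -> B, c : C' -> C, d : D' -> D
     back faces : (A',B',A,B) and (A',C',A,C)
     front faces: (B',D',B,D) and (C',D',C,D)                   *)
Definition vertical_weak_VK (M : MorClass) {A B C D : Coalg}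
  (m : Hom A B) (f : Hom A C) (g : Hom B D) (n : Hom C D) : Prop :=
  forall (A' B' C' D' : Coalg)
    (m' : Hom A' B') (f' : Hom A' C') (g' : Hom B' D') (n' : Hom C' D')
    (a : Hom A' A) (b : Hom B' B) (c : Hom C' C) (d : Hom D' D),
    commutes m' f' g' n' ->
    commutes m' a b m ->
    commutes f' a c f ->
    commutes g' b d g ->
    commutes n' c d n ->
    M _ _ a -> M _ _ b -> M _ _ c -> M _ _ d ->
    isPullback m' a b m ->
    isPullback f' a c f ->
    (isPushout m' f' g' n' <-> (isPullback g' b d g /\ isPullback n' c d n)).

Definition M_adhesive (M : MorClass) : Prop :=
  (forall X Y (h : Hom X Y), M X Y h -> isMono h) /\
  (forall X, M X X (hid X)) /\
  (forall X Y Z (f : Hom X Y) (g : Hom Y Z), M _ _ f -> M _ _ g -> M _ _ (hcomp g f)) /\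
  (forall X Y Z (g1 : Hom X Z) (g2 : Hom Y Z), M _ _ g1 ->
     exists (P : Coalg) (p1 : Hom P X) (p2 : Hom P Y), isPullback p1 p2 g1 g2) /\
  (forall P X Y Z (p1 : Hom P X) (p2 : Hom P Y) (g1 : Hom X Z) (g2 : Hom Y Z),
     isPullback p1 p2 g1 g2 -> M _ _ g1 -> M _ _ p2) /\
  (forall A B C (m : Hom A B) (f : Hom A C), M _ _ m ->
     exists (D : Coalg) (g : Hom B D) (n : Hom C D), isPushout m f g n) /\
  (forall A B C D (m : Hom A B) (f : Hom A C) (g : Hom B D) (n : Hom C D),
     isPushout m f g n -> M _ _ m -> M _ _ n) /\
  (forall A B C D (m : Hom A B) (f : Hom A C) (g : Hom B D) (n : Hom C D),
     isPushout m f g n -> M _ _ m -> vertical_weak_VK M m f g n).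

End Coalgebras.

(* All the structure is computed componentwise on nodes and edges.  A square
   of coalgebras over a cospan with a leg [g1] in M is a pullback iff both
   component squares are pullbacks of sets: F and G send the component
   pullback to a pullback, so they lift the structure maps to it uniquely.
   Pushouts along M need no hypothesis on F and G at all: the pushout of
   [m : A -> B] and [f : A -> C] glues to [C] the part of [B] outside the
   image of [m], and each glued element keeps the structure it had in [C] or
   in [B].  The M-adhesivity axioms thereby reduce to their set-theoretic
   versions, where the van Kampen property is an element chase through the
   glued sets. *)

From Stdlib Require Import FunctionalExtensionality ProofIrrelevance ClassicalEpsilon.

Section PullbacksOfSets.
Context {P X Y Z : Type} {p1 : P -> X} {p2 : P -> Y} {g1 : X -> Z} {g2 : Y -> Z}.

Lemma isPullbackSet_lift :
  isPullbackSet p1 p2 g1 g2 -> forall x y, g1 x = g2 y -> exists p, p1 p = x /\ p2 p = y.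
Proof.
  intros [_ up] x y e.
  destruct (up unit (fun _ => x) (fun _ => y) (fun _ => e)) as [u [u1 [u2 _]]].
  exists (u tt). auto.
Qed.

Lemma isPullbackSet_jointly_injective :
  isPullbackSet p1 p2 g1 g2 -> forall p q, p1 p = p1 q -> p2 p = p2 q -> p = q.
Proof.
  intros [comm up] p q e1 e2.
  destruct (up unit (fun _ => p1 p) (fun _ => p2 p) (fun _ => comm p)) as [u [_ [_ u_uniq]]].
  transitivity (u tt).
  - apply (u_uniq (fun _ => p)); reflexivity.
  - symmetry. apply (u_uniq (fun _ => q)); auto.
Qed.

Lemma isPullbackSet_intro :
  (forall p, g1 (p1 p) = g2 (p2 p)) ->
  (forall x y, g1 x = g2 y -> exists p, p1 p = x /\ p2 p = y) ->
  (forall p q, p1 p = p1 q -> p2 p = p2 q -> p = q) ->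
  isPullbackSet p1 p2 g1 g2.
Proof.
  intros comm lift inj. split; [exact comm |].
  intros Q q1 q2 qcomm.
  exists (fun z => proj1_sig (constructive_indefinite_description _ (lift _ _ (qcomm z)))).
  split; [| split].
  - intro z. destruct (constructive_indefinite_description _ _) as [p [e1 e2]]. exact e1.
  - intro z. destruct (constructive_indefinite_description _ _) as [p [e1 e2]]. exact e2.
  - intros u' u1 u2 z. destruct (constructive_indefinite_description _ _) as [p [e1 e2]].
    apply inj; simpl; congruence.
Qed.

Lemma isPullbackSet_injective :
  isPullbackSet p1 p2 g1 g2 -> injective g1 -> injective p2.
Proof.
  intros pb g1_inj p q e.
  apply (isPullbackSet_jointly_injective pb); [| exact e].
  apply g1_inj. rewrite (proj1 pb p), (proj1 pb q), e. reflexivity.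
Qed.

End PullbacksOfSets.

Lemma isPullbackSet_retract {P Q X Y Z : Type} {p1 : P -> X} {p2 : P -> Y}
  {q1 : Q -> X} {q2 : Q -> Y} {g1 : X -> Z} {g2 : Y -> Z} (u : Q -> P) (v : P -> Q) :
  isPullbackSet q1 q2 g1 g2 ->
  (forall z, p1 (u z) = q1 z) -> (forall z, p2 (u z) = q2 z) -> (forall p, u (v p) = p) ->
  isPullbackSet p1 p2 g1 g2.
Proof.
  intros pb u1 u2 uv. apply isPullbackSet_intro.
  - intro p. rewrite <- (uv p), u1, u2. apply (proj1 pb).
  - intros x y e. destruct (isPullbackSet_lift pb x y e) as [z [<- <-]].
    exists (u z). auto.
  - intros p q e1 e2. rewrite <- (uv p), <- (uv q). f_equal.
    apply (isPullbackSet_jointly_injective pb); rewrite <- ?u1, <- ?u2, !uv; assumption.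
Qed.

Definition pb_carrier {X Y Z : Type} (g1 : X -> Z) (g2 : Y -> Z) : Type :=
  {xy : X * Y | g1 (fst xy) = g2 (snd xy)}.

Definition pb_fst {X Y Z : Type} (g1 : X -> Z) (g2 : Y -> Z) (p : pb_carrier g1 g2) : X :=
  fst (proj1_sig p).

Definition pb_snd {X Y Z : Type} (g1 : X -> Z) (g2 : Y -> Z) (p : pb_carrier g1 g2) : Y :=
  snd (proj1_sig p).

Lemma isPullbackSet_pb_carrier {X Y Z : Type} (g1 : X -> Z) (g2 : Y -> Z) :
  isPullbackSet (pb_fst g1 g2) (pb_snd g1 g2) g1 g2.
Proof.
  apply isPullbackSet_intro.
  - intros [xy e]. exact e.
  - intros x y e. exists (exist _ (x, y) e). auto.
  - intros [[x y] e] [[x' y'] e'] e1 e2. unfold pb_fst, pb_snd in *; simpl in *. subst.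
    f_equal. apply proof_irrelevance.
Qed.

(* Elementwise description of a pushout of sets along an injection [m]: [D] is
   [C] together with a copy of the part of [B] outside the image of [m]. *)
Record isGluing {A B C D : Type} {m : A -> B} {f : A -> C} {g : B -> D} {n : C -> D} : Prop := {
  gluing_comm : forall a, g (m a) = n (f a);
  gluing_n_injective : injective n;
  gluing_jointly_surjective : forall d, (exists b, g b = d) \/ (exists c, n c = d);
  gluing_meet : forall b c, g b = n c -> exists a, m a = b /\ f a = c;
  gluing_g_fibers : forall b1 b2, g b1 = g b2 -> b1 = b2 \/ exists c, g b1 = n c
}.
Arguments isGluing {A B C D} m f g n.

Section Gluings.
Context {A B C D : Type} {m : A -> B} {f : A -> C} {g : B -> D} {n : C -> D}.

Lemma gluing_factor {Q : Type} (u : B -> Q) (v : C -> Q) :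
  isGluing m f g n -> (forall a, u (m a) = v (f a)) ->
  {w : D -> Q | (forall b, w (g b) = u b) /\ (forall c, w (n c) = v c)}.
Proof.
  intros glued uv.
  assert (meet : forall b c, g b = n c -> u b = v c).
  { intros b c e. destruct (gluing_meet glued b c e) as [a [<- <-]]. apply uv. }
  assert (fibers : forall b1 b2, g b1 = g b2 -> u b1 = u b2).
  { intros b1 b2 e. destruct (gluing_g_fibers glued b1 b2 e) as [<- | [c ec]]; [reflexivity |].
    rewrite (meet b1 c ec). symmetry. apply meet. congruence. }
  assert (value : forall d, exists q,
             (exists b, g b = d /\ u b = q) \/ (exists c, n c = d /\ v c = q)).
  { intro d. destruct (gluing_jointly_surjective glued d) as [[b <-] | [c <-]]; eauto. }
  exists (fun d => proj1_sig (constructive_indefinite_description _ (value d))).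
  split; [intro b | intro c]; destruct (constructive_indefinite_description _ _)
    as [q [[b' [e <-]] | [c' [e <-]]]]; simpl.
  - apply fibers. exact e.
  - symmetry. apply meet. auto.
  - apply meet. exact e.
  - f_equal. apply (gluing_n_injective glued). exact e.
Qed.

Lemma gluing_ext {Q : Type} (w1 w2 : D -> Q) :
  isGluing m f g n ->
  (forall b, w1 (g b) = w2 (g b)) -> (forall c, w1 (n c) = w2 (n c)) -> forall d, w1 d = w2 d.
Proof.
  intros glued eg en d.
  destruct (gluing_jointly_surjective glued d) as [[b <-] | [c <-]]; auto.
Qed.

Lemma gluing_g_fibers_image :
  isGluing m f g n -> forall b1 b2, g b1 = g b2 ->
  b1 = b2 \/ exists a1 a2, m a1 = b1 /\ m a2 = b2 /\ f a1 = f a2.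
Proof.
  intros glued b1 b2 e.
  destruct (gluing_g_fibers glued b1 b2 e) as [<- | [c ec]]; [left; reflexivity | right].
  destruct (gluing_meet glued _ _ ec) as [a1 [e1 e1']]. rewrite e in ec.
  destruct (gluing_meet glued _ _ ec) as [a2 [e2 e2']].
  exists a1, a2. repeat split; congruence.
Qed.

Lemma isGluing_retract {D0 : Type} {g0 : B -> D0} {n0 : C -> D0} (phi : D -> D0) (psi : D0 -> D) :
  isGluing m f g0 n0 ->
  (forall b, phi (g b) = g0 b) -> (forall c, phi (n c) = n0 c) -> (forall d, psi (phi d) = d) ->
  isGluing m f g n.
Proof.
  intros glued eg en psi_phi. split.
  - intro a. rewrite <- (psi_phi (g _)), <- (psi_phi (n _)), eg, en, (gluing_comm glued).
    reflexivity.
  - intros c1 c2 e. apply (gluing_n_injective glued). rewrite <- !en, e. reflexivity.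
  - intro d. rewrite <- (psi_phi d).
    destruct (gluing_jointly_surjective glued (phi d)) as [[b <-] | [c <-]].
    + left. exists b. rewrite <- eg, psi_phi. reflexivity.
    + right. exists c. rewrite <- en, psi_phi. reflexivity.
  - intros b c e. apply (gluing_meet glued). rewrite <- eg, <- en, e. reflexivity.
  - intros b1 b2 e. destruct (gluing_g_fibers glued b1 b2) as [| [c ec]].
    + rewrite <- !eg, e. reflexivity.
    + left. assumption.
    + right. exists c. rewrite <- (psi_phi (g b1)), <- (psi_phi (n c)), eg, en, ec. reflexivity.
Qed.

End Gluings.

Definition glue_carrier {A B C : Type} (m : A -> B) (f : A -> C) : Type :=
  (C + {b : B | ~ exists a, m a = b})%type.

Definition glue_map {A B C : Type} (m : A -> B) (f : A -> C) (b : B) : glue_carrier m f :=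
  match excluded_middle_informative (exists a, m a = b) with
  | left im => inl (f (proj1_sig (constructive_indefinite_description _ im)))
  | right out => inr (exist _ b out)
  end.

Lemma glue_map_cases {A B C : Type} (m : A -> B) (f : A -> C) (b : B) :
  (exists a, m a = b /\ glue_map m f b = inl (f a)) \/
  (exists out, glue_map m f b = inr (exist _ b out)).
Proof.
  unfold glue_map. destruct (excluded_middle_informative _) as [im | out].
  - left. destruct (constructive_indefinite_description _ im) as [a e]. eauto.
  - right. eauto.
Qed.

Lemma glue_map_image {A B C : Type} (m : A -> B) (f : A -> C) :
  injective m -> forall a, glue_map m f (m a) = inl (f a).
Proof.
  intros m_inj a. destruct (glue_map_cases m f (m a)) as [[a' [e ->]] | [out _]].
  - apply m_inj in e. subst. reflexivity.
  - exfalso. apply out. eauto.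
Qed.

Lemma isGluing_glue {A B C : Type} (m : A -> B) (f : A -> C) :
  injective m -> isGluing m f (glue_map m f) inl.
Proof.
  intro m_inj. split.
  - apply glue_map_image. exact m_inj.
  - intros x y e. injection e. auto.
  - intros [c | [b out]]; [right; eauto | left; exists b].
    destruct (glue_map_cases m f b) as [[a [e _]] | [out' ->]].
    + exfalso. apply out. eauto.
    + do 2 f_equal. apply proof_irrelevance.
  - intros b c e. destruct (glue_map_cases m f b) as [[a [e1 e2]] | [out e2]]; rewrite e2 in e.
    + injection e. eauto.
    + discriminate.
  - intros b1 b2 e. destruct (glue_map_cases m f b1) as [[a [e1 e2]] | [out e2]]; [right; eauto |].
    left. rewrite e2 in e.
    destruct (glue_map_cases m f b2) as [[a [_ e2']] | [out' e2']]; rewrite e2' in e.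
    + discriminate.
    + injection e. auto.
Qed.

Section GluingCube.
Context {A B C D A' B' C' D' : Type}
  {m : A -> B} {f : A -> C} {g : B -> D} {n : C -> D}
  {m' : A' -> B'} {f' : A' -> C'} {g' : B' -> D'} {n' : C' -> D'}
  {a : A' -> A} {b : B' -> B} {c : C' -> C} {d : D' -> D}.
Hypotheses (bottom : isGluing m f g n)
  (top_comm : forall x, g' (m' x) = n' (f' x))
  (back_m : forall x, b (m' x) = m (a x)) (back_f : forall x, c (f' x) = f (a x))
  (front_g : forall x, d (g' x) = g (b x)) (front_n : forall x, d (n' x) = n (c x))
  (b_inj : injective b) (c_inj : injective c)
  (pb_m : isPullbackSet m' a b m) (pb_f : isPullbackSet f' a c f).

Lemma front_g_pullback_of_top_gluing : isGluing m' f' g' n' -> isPullbackSet g' b d g.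
Proof.
  intro top. apply isPullbackSet_intro; [exact front_g | | auto].
  intros x y e. destruct (gluing_jointly_surjective top x) as [[y' <-] | [z' <-]].
  - rewrite front_g in e.
    destruct (gluing_g_fibers_image bottom _ _ e) as [<- | [a1 [a2 [e1 [<- e12]]]]]; [eauto |].
    destruct (isPullbackSet_lift pb_m y' a1 (eq_sym e1)) as [x1 [<- ex1]].
    assert (e' : c (f' x1) = f a2) by (rewrite back_f, ex1; exact e12).
    destruct (isPullbackSet_lift pb_f _ _ e') as [x2 [ex2 ex2']].
    exists (m' x2). split.
    + rewrite !top_comm, ex2. reflexivity.
    + rewrite back_m, ex2'. reflexivity.
  - rewrite front_n in e.
    destruct (gluing_meet bottom _ _ (eq_sym e)) as [a0 [<- e0]].
    destruct (isPullbackSet_lift pb_f z' a0 (eq_sym e0)) as [x0 [<- ex0]].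
    exists (m' x0). split; [apply top_comm | rewrite back_m, ex0; reflexivity].
Qed.

Lemma front_n_pullback_of_top_gluing : isGluing m' f' g' n' -> isPullbackSet n' c d n.
Proof.
  intro top. apply isPullbackSet_intro; [exact front_n | | auto].
  intros x z e. destruct (gluing_jointly_surjective top x) as [[y' <-] | [z' <-]].
  - rewrite front_g in e.
    destruct (gluing_meet bottom _ _ e) as [a0 [e0 <-]].
    destruct (isPullbackSet_lift pb_m y' a0 (eq_sym e0)) as [x0 [<- ex0]].
    exists (f' x0). split; [symmetry; apply top_comm | rewrite back_f, ex0; reflexivity].
  - rewrite front_n in e. apply (gluing_n_injective bottom) in e. eauto.
Qed.

Lemma top_gluing_of_front_pullbacks :
  isPullbackSet g' b d g -> isPullbackSet n' c d n -> isGluing m' f' g' n'.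
Proof.
  intros pb_g pb_n. split; [exact top_comm | | | |].
  - intros z1 z2 e. apply c_inj, (gluing_n_injective bottom). rewrite <- !front_n, e. reflexivity.
  - intro x. destruct (gluing_jointly_surjective bottom (d x)) as [[y e] | [z e]].
    + destruct (isPullbackSet_lift pb_g x y (eq_sym e)) as [y' [<- _]]. eauto.
    + destruct (isPullbackSet_lift pb_n x z (eq_sym e)) as [z' [<- _]]. eauto.
  - intros y' z' e.
    assert (e' : g (b y') = n (c z')) by (rewrite <- front_g, <- front_n, e; reflexivity).
    destruct (gluing_meet bottom _ _ e') as [a0 [e0 e0']].
    destruct (isPullbackSet_lift pb_m y' a0 (eq_sym e0)) as [x0 [<- ex0]].
    exists x0. split; [reflexivity |].
    apply c_inj. rewrite back_f, ex0. exact e0'.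
  - intros y1 y2 e.
    assert (e' : g (b y1) = g (b y2)) by (rewrite <- !front_g, e; reflexivity).
    destruct (gluing_g_fibers bottom _ _ e') as [e12 | [z ez]]; [left; apply b_inj, e12 | right].
    rewrite <- front_g in ez.
    destruct (isPullbackSet_lift pb_n _ _ ez) as [z' [ez' _]]. eauto.
Qed.

Lemma gluing_vertical_weak_VK :
  isGluing m' f' g' n' <-> isPullbackSet g' b d g /\ isPullbackSet n' c d n.
Proof.
  split.
  - intro top. split; [apply front_g_pullback_of_top_gluing | apply front_n_pullback_of_top_gluing];
      exact top.
  - intros [pb_g pb_n]. apply top_gluing_of_front_pullbacks; assumption.
Qed.

End GluingCube.

Lemma fmap_comp_ext (H : BiFunctor) {A B C D E K : Type} (f : A -> C) (g : B -> D)
  (f' : C -> E) (g' : D -> K) (h : A -> E) (k : B -> K) (z : H A B) :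
  (forall x, f' (f x) = h x) -> (forall y, g' (g y) = k y) ->
  fmap H f' g' (fmap H f g z) = fmap H h k z.
Proof.
  intros eh ek.
  replace h with (fun x => f' (f x)) by (extensionality x; apply eh).
  replace k with (fun y => g' (g y)) by (extensionality y; apply ek).
  symmetry. apply fmap_comp.
Qed.

Lemma fmap_pb_carrier_lift (H : BiFunctor) (H_pb : preserves_pullbacks_along_injections H)
  {NX EX NY EY NZ EZ : Type} {gN1 : NX -> NZ} {gE1 : EX -> EZ} (gN2 : NY -> NZ) (gE2 : EY -> EZ) :
  injective gN1 -> injective gE1 ->
  forall (sx : H NX EX) (sy : H NY EY), fmap H gN1 gE1 sx = fmap H gN2 gE2 sy ->
  {z : H (pb_carrier gN1 gN2) (pb_carrier gE1 gE2) |
    fmap H (pb_fst gN1 gN2) (pb_fst gE1 gE2) z = sx /\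
    fmap H (pb_snd gN1 gN2) (pb_snd gE1 gE2) z = sy}.
Proof.
  intros gN1_inj gE1_inj sx sy e. apply constructive_indefinite_description.
  refine (isPullbackSet_lift (H_pb _ _ _ _ _ _ _ _ _ _ _ _ _ _ _ _ _ _ _) _ _ e);
    [apply isPullbackSet_pb_carrier | apply isPullbackSet_pb_carrier | left; split; assumption].
Qed.

Lemma fmap_glue_map_image (H : BiFunctor) {A1 B1 C1 A2 B2 C2 : Type}
  (m1 : A1 -> B1) (f1 : A1 -> C1) (m2 : A2 -> B2) (f2 : A2 -> C2) (s : H A1 A2) :
  injective m1 -> injective m2 ->
  fmap H (glue_map m1 f1) (glue_map m2 f2) (fmap H m1 m2 s) = fmap H inl inl (fmap H f1 f2 s).
Proof.
  intros m1_inj m2_inj.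
  rewrite (fmap_comp_ext H f1 f2 inl inl (fun x => inl (f1 x)) (fun x => inl (f2 x)))
    by reflexivity.
  apply fmap_comp_ext; apply glue_map_image; assumption.
Qed.

Arguments cmap {F G} _ _.
Arguments stmap {F G} _ _.
Arguments hN {F G X Y} _ _.
Arguments hE {F G X Y} _ _.
Arguments hom_c {F G X Y} _ _.
Arguments hom_st {F G X Y} _ _.
Arguments Build_Hom {F G X Y} _ _ _ _.
Arguments heq {F G X Y} _ _.
Arguments hid {F G} _.
Arguments hcomp {F G X Y Z} _ _.
Arguments isPullback {F G P X Y Z} _ _ _ _.
Arguments isPushout {F G A B C D} _ _ _ _.

Section Coalgebras.
Variables F G : BiFunctor.
Hypotheses (F_pb : preserves_pullbacks_along_injections F)
  (G_pb : preserves_pullbacks_along_injections G).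
Local Notation coalg := (Coalg F G).
Local Notation hom := (Hom F G).

Lemma isPullback_jointly_mono {P X Y Z Q : coalg}
  {p1 : hom P X} {p2 : hom P Y} {g1 : hom X Z} {g2 : hom Y Z} (u u' : hom Q P) :
  isPullback p1 p2 g1 g2 ->
  heq (hcomp p1 u) (hcomp p1 u') -> heq (hcomp p2 u) (hcomp p2 u') -> heq u u'.
Proof.
  intros [[commN commE] up] [e1N e1E] [e2N e2E]; simpl in *.
  destruct (up Q (hcomp p1 u') (hcomp p2 u')) as [w [_ [_ w_uniq]]].
  { split; intro; simpl; auto. }
  destruct (w_uniq u) as [uN uE]; [split; intro; simpl; auto .. |].
  destruct (w_uniq u') as [uN' uE']; [split; intro; simpl; auto .. |].
  split; intro; congruence.
Qed.

Lemma isPullback_comparison {P Q X Y Z : coalg} {p1 : hom P X} {p2 : hom P Y}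
  {q1 : hom Q X} {q2 : hom Q Y} {g1 : hom X Z} {g2 : hom Y Z} :
  isPullback p1 p2 g1 g2 -> isPullback q1 q2 g1 g2 ->
  exists (u : hom Q P) (v : hom P Q),
    heq (hcomp p1 u) q1 /\ heq (hcomp p2 u) q2 /\ heq (hcomp u v) (hid P).
Proof.
  intros pbP pbQ.
  destruct (proj2 pbP Q q1 q2 (proj1 pbQ)) as [u [[u1N u1E] [[u2N u2E] _]]].
  destruct (proj2 pbQ P p1 p2 (proj1 pbP)) as [v [[v1N v1E] [[v2N v2E] _]]].
  exists u, v. split; [split; assumption | split; [split; assumption |]].
  apply (isPullback_jointly_mono _ _ pbP); split; intro; simpl in *; congruence.
Qed.

Lemma isPushout_jointly_epi {A B C D Q : coalg}
  {m : hom A B} {f : hom A C} {g : hom B D} {n : hom C D} (w w' : hom D Q) :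
  isPushout m f g n ->
  heq (hcomp w g) (hcomp w' g) -> heq (hcomp w n) (hcomp w' n) -> heq w w'.
Proof.
  intros [[commN commE] up] [e1N e1E] [e2N e2E]; simpl in *.
  destruct (up Q (hcomp w' g) (hcomp w' n)) as [z [_ [_ z_uniq]]].
  { split; intro; simpl; congruence. }
  destruct (z_uniq w) as [wN wE]; [split; intro; simpl; auto .. |].
  destruct (z_uniq w') as [wN' wE']; [split; intro; simpl; auto .. |].
  split; intro; congruence.
Qed.

Lemma isPushout_comparison {A B C D D0 : coalg} {m : hom A B} {f : hom A C}
  {g : hom B D} {n : hom C D} {g0 : hom B D0} {n0 : hom C D0} :
  isPushout m f g n -> isPushout m f g0 n0 ->
  exists (u : hom D D0) (v : hom D0 D),
    heq (hcomp u g) g0 /\ heq (hcomp u n) n0 /\ heq (hcomp v u) (hid D).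
Proof.
  intros poD poD0.
  destruct (proj2 poD D0 g0 n0 (proj1 poD0)) as [u [[u1N u1E] [[u2N u2E] _]]].
  destruct (proj2 poD0 D g n (proj1 poD)) as [v [[v1N v1E] [[v2N v2E] _]]].
  exists u, v. split; [split; assumption | split; [split; assumption |]].
  apply (isPushout_jointly_epi _ _ poD); split; intro; simpl in *; congruence.
Qed.

Lemma isPullback_of_components {P X Y Z : coalg}
  (p1 : hom P X) (p2 : hom P Y) (g1 : hom X Z) (g2 : hom Y Z) :
  Minj F G _ _ g1 ->
  isPullbackSet (hN p1) (hN p2) (hN g1) (hN g2) ->
  isPullbackSet (hE p1) (hE p2) (hE g1) (hE g2) ->
  isPullback p1 p2 g1 g2.
Proof.
  intros [gN_inj gE_inj] pbN pbE. split.
  { split; intro; simpl; [apply (proj1 pbN) | apply (proj1 pbE)]. }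
  intros Q q1 q2 [qN qE]; simpl in qN, qE.
  destruct (proj2 pbN _ _ _ qN) as [uN [uN1 [uN2 uN_uniq]]].
  destruct (proj2 pbE _ _ _ qE) as [uE [uE1 [uE2 uE_uniq]]].
  pose proof (F_pb _ _ _ _ _ _ _ _ _ _ _ _ _ _ _ _ pbN pbE (or_introl (conj gN_inj gE_inj))) as pbF.
  pose proof (G_pb _ _ _ _ _ _ _ _ _ _ _ _ _ _ _ _ pbN pbE (or_introl (conj gN_inj gE_inj))) as pbG.
  assert (u_c : forall x, fmap F uN uE (cmap Q x) = cmap P (uN x)).
  { intro x. apply (isPullbackSet_jointly_injective pbF).
    - rewrite (fmap_comp_ext F _ _ _ _ (hN q1) (hE q1)) by assumption.
      rewrite hom_c, hom_c, uN1. reflexivity.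
    - rewrite (fmap_comp_ext F _ _ _ _ (hN q2) (hE q2)) by assumption.
      rewrite hom_c, hom_c, uN2. reflexivity. }
  assert (u_st : forall x, fmap G uN uE (stmap Q x) = stmap P (uE x)).
  { intro x. apply (isPullbackSet_jointly_injective pbG).
    - rewrite (fmap_comp_ext G _ _ _ _ (hN q1) (hE q1)) by assumption.
      rewrite hom_st, hom_st, uE1. reflexivity.
    - rewrite (fmap_comp_ext G _ _ _ _ (hN q2) (hE q2)) by assumption.
      rewrite hom_st, hom_st, uE2. reflexivity. }
  exists (Build_Hom uN uE u_c u_st).
  split; [split; assumption | split; [split; assumption |]].
  intros u' [u'1N u'1E] [u'2N u'2E].
  split; [apply (uN_uniq (hN u')) | apply (uE_uniq (hE u'))]; assumption.
Qed.

Section CanonicalPullback.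
Variables (X Y Z : coalg) (g1 : hom X Z) (g2 : hom Y Z) (g1_M : Minj F G _ _ g1).

Lemma cmap_match_on_pb_carrier (p : pb_carrier (hN g1) (hN g2)) :
  fmap F (hN g1) (hE g1) (cmap X (pb_fst _ _ p)) = fmap F (hN g2) (hE g2) (cmap Y (pb_snd _ _ p)).
Proof. rewrite !hom_c. f_equal. exact (proj2_sig p). Qed.

Lemma stmap_match_on_pb_carrier (p : pb_carrier (hE g1) (hE g2)) :
  fmap G (hN g1) (hE g1) (stmap X (pb_fst _ _ p)) = fmap G (hN g2) (hE g2) (stmap Y (pb_snd _ _ p)).
Proof. rewrite !hom_st. f_equal. exact (proj2_sig p). Qed.

Let cmap_lift (p : pb_carrier (hN g1) (hN g2)) :=
  fmap_pb_carrier_lift F F_pb _ _ (proj1 g1_M) (proj2 g1_M) _ _ (cmap_match_on_pb_carrier p).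

Let stmap_lift (p : pb_carrier (hE g1) (hE g2)) :=
  fmap_pb_carrier_lift G G_pb _ _ (proj1 g1_M) (proj2 g1_M) _ _ (stmap_match_on_pb_carrier p).

Definition pullback_coalg : coalg :=
  Build_Coalg F G (pb_carrier (hN g1) (hN g2)) (pb_carrier (hE g1) (hE g2))
    (fun p => proj1_sig (cmap_lift p)) (fun p => proj1_sig (stmap_lift p)).

Definition pullback_fst : hom pullback_coalg X :=
  @Build_Hom F G pullback_coalg X (pb_fst _ _) (pb_fst _ _)
    (fun p => proj1 (proj2_sig (cmap_lift p))) (fun p => proj1 (proj2_sig (stmap_lift p))).

Definition pullback_snd : hom pullback_coalg Y :=
  @Build_Hom F G pullback_coalg Y (pb_snd _ _) (pb_snd _ _)
    (fun p => proj2 (proj2_sig (cmap_lift p))) (fun p => proj2 (proj2_sig (stmap_lift p))).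

Lemma isPullback_pullback_coalg : isPullback pullback_fst pullback_snd g1 g2.
Proof. apply isPullback_of_components; [exact g1_M | apply isPullbackSet_pb_carrier ..]. Qed.

End CanonicalPullback.

Lemma components_of_isPullback {P X Y Z : coalg}
  (p1 : hom P X) (p2 : hom P Y) (g1 : hom X Z) (g2 : hom Y Z) :
  Minj F G _ _ g1 -> isPullback p1 p2 g1 g2 ->
  isPullbackSet (hN p1) (hN p2) (hN g1) (hN g2) /\
  isPullbackSet (hE p1) (hE p2) (hE g1) (hE g2).
Proof.
  intros g1_M pb.
  destruct (isPullback_comparison pb (isPullback_pullback_coalg _ _ _ g1 g2 g1_M))
    as [u [v [[u1N u1E] [[u2N u2E] [uvN uvE]]]]]; simpl in *.
  split; eapply isPullbackSet_retract; eauto using isPullbackSet_pb_carrier.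
Qed.

Lemma isPushout_of_components {A B C D : coalg}
  (m : hom A B) (f : hom A C) (g : hom B D) (n : hom C D) :
  isGluing (hN m) (hN f) (hN g) (hN n) -> isGluing (hE m) (hE f) (hE g) (hE n) ->
  isPushout m f g n.
Proof.
  intros glueN glueE. split.
  { split; intro; simpl; apply gluing_comm; assumption. }
  intros Q u v [uvN uvE]; simpl in uvN, uvE.
  destruct (gluing_factor (hN u) (hN v) glueN uvN) as [wN [wN_g wN_n]].
  destruct (gluing_factor (hE u) (hE v) glueE uvE) as [wE [wE_g wE_n]].
  assert (w_c : forall x, fmap F wN wE (cmap D x) = cmap Q (wN x)).
  { intro x. destruct (gluing_jointly_surjective glueN x) as [[y <-] | [z <-]].
    - rewrite <- hom_c, (fmap_comp_ext F _ _ _ _ (hN u) (hE u)), hom_c, wN_g by assumption.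
      reflexivity.
    - rewrite <- hom_c, (fmap_comp_ext F _ _ _ _ (hN v) (hE v)), hom_c, wN_n by assumption.
      reflexivity. }
  assert (w_st : forall x, fmap G wN wE (stmap D x) = stmap Q (wE x)).
  { intro x. destruct (gluing_jointly_surjective glueE x) as [[y <-] | [z <-]].
    - rewrite <- hom_st, (fmap_comp_ext G _ _ _ _ (hN u) (hE u)), hom_st, wE_g by assumption.
      reflexivity.
    - rewrite <- hom_st, (fmap_comp_ext G _ _ _ _ (hN v) (hE v)), hom_st, wE_n by assumption.
      reflexivity. }
  exists (Build_Hom wN wE w_c w_st).
  split; [split; assumption | split; [split; assumption |]].
  intros w' [w'gN w'gE] [w'nN w'nE]; simpl in *.
  split; [apply (gluing_ext _ _ glueN) | apply (gluing_ext _ _ glueE)]; intros; simpl; congruence.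
Qed.

Section CanonicalPushout.
Variables (A B C : coalg) (m : hom A B) (f : hom A C) (m_M : Minj F G _ _ m).

Definition pushout_coalg : coalg :=
  Build_Coalg F G (glue_carrier (hN m) (hN f)) (glue_carrier (hE m) (hE f))
    (fun x => match x with
              | inl z => fmap F inl inl (cmap C z)
              | inr y => fmap F (glue_map _ _) (glue_map _ _) (cmap B (proj1_sig y))
              end)
    (fun x => match x with
              | inl z => fmap G inl inl (stmap C z)
              | inr y => fmap G (glue_map _ _) (glue_map _ _) (stmap B (proj1_sig y))
              end).

Definition pushout_inr : hom C pushout_coalg :=
  @Build_Hom F G C pushout_coalg inl inl (fun _ => eq_refl) (fun _ => eq_refl).

Definition pushout_inl : hom B pushout_coalg.
Proof.
  refine (@Build_Hom F G B pushout_coalg (glue_map (hN m) (hN f)) (glue_map (hE m) (hE f)) _ _).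
  - intro y. destruct (glue_map_cases (hN m) (hN f) y) as [[x [<- ->]] | [out ->]]; [| reflexivity].
    simpl. rewrite <- (hom_c m), <- (hom_c f). apply fmap_glue_map_image; apply m_M.
  - intro y. destruct (glue_map_cases (hE m) (hE f) y) as [[x [<- ->]] | [out ->]]; [| reflexivity].
    simpl. rewrite <- (hom_st m), <- (hom_st f). apply fmap_glue_map_image; apply m_M.
Defined.

Lemma isPushout_pushout_coalg : isPushout m f pushout_inl pushout_inr.
Proof. apply isPushout_of_components; apply isGluing_glue, m_M. Qed.

End CanonicalPushout.

Lemma components_of_isPushout {A B C D : coalg}
  (m : hom A B) (f : hom A C) (g : hom B D) (n : hom C D) :
  Minj F G _ _ m -> isPushout m f g n ->
  isGluing (hN m) (hN f) (hN g) (hN n) /\ isGluing (hE m) (hE f) (hE g) (hE n).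
Proof.
  intros m_M po.
  destruct (isPushout_comparison po (isPushout_pushout_coalg _ _ _ m f m_M))
    as [u [v [[ugN ugE] [[unN unE] [vuN vuE]]]]]; simpl in *.
  split; eapply isGluing_retract; eauto; apply isGluing_glue, m_M.
Qed.

Lemma Minj_mono {X Y : coalg} (h : hom X Y) : Minj F G _ _ h -> isMono F G h.
Proof.
  intros [hN_inj hE_inj] Q u v [eN eE]; simpl in *.
  split; intro; [apply hN_inj | apply hE_inj]; auto.
Qed.

Lemma Minj_id (X : coalg) : Minj F G _ _ (hid X).
Proof. split; intros x y e; exact e. Qed.

Lemma Minj_comp {X Y Z : coalg} (f : hom X Y) (g : hom Y Z) :
  Minj F G _ _ f -> Minj F G _ _ g -> Minj F G _ _ (hcomp g f).
Proof. intros [fN fE] [gN gE]. split; intros x y e; simpl in *; auto. Qed.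

Lemma pullback_along_Minj_exists {X Y Z : coalg} (g1 : hom X Z) (g2 : hom Y Z) :
  Minj F G _ _ g1 -> exists (P : coalg) (p1 : hom P X) (p2 : hom P Y), isPullback p1 p2 g1 g2.
Proof. intro g1_M. do 3 eexists. exact (isPullback_pullback_coalg _ _ _ g1 g2 g1_M). Qed.

Lemma Minj_pullback_stable {P X Y Z : coalg}
  (p1 : hom P X) (p2 : hom P Y) (g1 : hom X Z) (g2 : hom Y Z) :
  isPullback p1 p2 g1 g2 -> Minj F G _ _ g1 -> Minj F G _ _ p2.
Proof.
  intros pb g1_M. destruct (components_of_isPullback _ _ _ _ g1_M pb) as [pbN pbE].
  split; [exact (isPullbackSet_injective pbN (proj1 g1_M)) |
          exact (isPullbackSet_injective pbE (proj2 g1_M))].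
Qed.

Lemma pushout_along_Minj_exists {A B C : coalg} (m : hom A B) (f : hom A C) :
  Minj F G _ _ m -> exists (D : coalg) (g : hom B D) (n : hom C D), isPushout m f g n.
Proof. intro m_M. do 3 eexists. exact (isPushout_pushout_coalg _ _ _ m f m_M). Qed.

Lemma Minj_pushout_stable {A B C D : coalg}
  (m : hom A B) (f : hom A C) (g : hom B D) (n : hom C D) :
  isPushout m f g n -> Minj F G _ _ m -> Minj F G _ _ n.
Proof.
  intros po m_M. destruct (components_of_isPushout _ _ _ _ m_M po) as [glueN glueE].
  split; [exact (gluing_n_injective glueN) | exact (gluing_n_injective glueE)].
Qed.

Lemma pushout_along_Minj_vertical_weak_VK {A B C D : coalg}
  (m : hom A B) (f : hom A C) (g : hom B D) (n : hom C D) :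
  isPushout m f g n -> Minj F G _ _ m -> vertical_weak_VK F G (Minj F G) m f g n.
Proof.
  intros po m_M A' B' C' D' m' f' g' n' a b c d [topN topE] [backmN backmE] [backfN backfE]
    [frontgN frontgE] [frontnN frontnE] a_M b_M c_M d_M pb_m pb_f; simpl in *.
  destruct (components_of_isPushout _ _ _ _ m_M po) as [glueN glueE].
  destruct (components_of_isPullback _ _ _ _ b_M pb_m) as [pb_mN pb_mE].
  destruct (components_of_isPullback _ _ _ _ c_M pb_f) as [pb_fN pb_fE].
  assert (m'_M : Minj F G _ _ m').
  { split; intros x y e; apply a_M, m_M; rewrite <- ?backmN, <- ?backmE, e; reflexivity. }
  pose proof (gluing_vertical_weak_VK glueN topN backmN backfN frontgN frontnN
                (proj1 b_M) (proj1 c_M) pb_mN pb_fN) as VK_N.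
  pose proof (gluing_vertical_weak_VK glueE topE backmE backfE frontgE frontnE
                (proj2 b_M) (proj2 c_M) pb_mE pb_fE) as VK_E.
  split.
  - intro top. destruct (components_of_isPushout _ _ _ _ m'_M top) as [topN' topE'].
    apply VK_N in topN' as [pb_gN pb_nN]. apply VK_E in topE' as [pb_gE pb_nE].
    split; apply isPullback_of_components; assumption.
  - intros [pb_g pb_n].
    destruct (components_of_isPullback _ _ _ _ d_M pb_g) as [pb_gN pb_gE].
    destruct (components_of_isPullback _ _ _ _ d_M pb_n) as [pb_nN pb_nE].
    apply isPushout_of_components; [apply VK_N | apply VK_E]; split; assumption.
Qed.

End Coalgebras.

Theorem mainTheorem11 (F G : BiFunctor) :
  preserves_injections F -> preserves_pullbacks_along_injections F ->
  preserves_injections G -> preserves_pullbacks_along_injections G ->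
  M_adhesive F G (Minj F G).
Proof.
  (* Preservation of injections is implied by preservation of pullbacks along
     injections, the kernel pair of an injection being trivial. *)
  intros _ F_pb _ G_pb.
  split; [| split; [| split; [| split; [| split; [| split; [| split]]]]]].
  - exact (@Minj_mono F G).
  - exact (Minj_id F G).
  - exact (@Minj_comp F G).
  - exact (@pullback_along_Minj_exists F G F_pb G_pb).
  - exact (@Minj_pullback_stable F G F_pb G_pb).
  - exact (@pushout_along_Minj_exists F G).
  - exact (@Minj_pushout_stable F G).
  - exact (@pushout_along_Minj_vertical_weak_VK F G F_pb G_pb).
Qed.
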